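(* For every bracket pattern $w$, $\langle\!\langle w\rangle\!\rangle=\{w'\mid w'\text{ bracket pattern},\ A(w')\subseteq A(w)\}$.
   Context: $\mathbb N=\{1,2,\dots\}$, $\mathbb N_0=\mathbb N\cup\{0\}$. A bracket pattern is a non-empty finite subset $w\subseteq\mathbb N$; $\|w\|:=\max(w)$. For bracket patterns $w,w'$: superposition $w\cup w'$; for $j\in w$ the projection $\cap_j w:=\{i\in w\mid i\le j\}$; the dual $w^\dagger:=\{\|w\|-i\mid i\in\mathbb N_0,\ i<\|w\|,\ i\notin w\}$. A bracket pattern category is a set of bracket patterns closed under superposition, duals and projections; $\langle\!\langle w\rangle\!\rangle$ denotes the smallest bracket pattern category containing $w$. The completion of a bracket pattern $w$ is $A(w):=\{j-i\mid j\in w,\ i\in\mathbb N_0,\ i\notin w,\ i<j\}$. *)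

From mathcomp Require Import all_boot.
From mathcomp Require Import finmap.
Set Implicit Arguments. Unset Strict Implicit. Unset Printing Implicit Defensive.
Local Open Scope fset_scope.

Definition is_bp (w : {fset nat}) : Prop := w != fset0 /\ 0 \notin w.

Definition bnorm (w : {fset nat}) : nat := \max_(i <- w) i.

(* superposition is fset union `|` *)

Definition bproj (j : nat) (w : {fset nat}) : {fset nat} := [fset i in w | i <= j].

Definition bdual (w : {fset nat}) : {fset nat} :=
  [fset bnorm w - i | i in iota 0 (bnorm w) & i \notin w].

Definition completion (w : {fset nat}) (d : nat) : Prop :=
  exists j i, [/\ j \in w, i \notin w, i < j & d = j - i].

Definition is_bp_category (C : {fset nat} -> Prop) : Prop :=
  [/\ (forall w, C w -> is_bp w),
      (forall w1 w2, C w1 -> C w2 -> C (w1 `|` w2)),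
      (forall w, C w -> C (bdual w)) &
      (forall w j, C w -> j \in w -> C (bproj j w))].

Definition generated_cat (w : {fset nat}) (w' : {fset nat}) : Prop :=
  forall C, is_bp_category C -> C w -> C w'.

From mathcomp Require Import all_boot finmap zify.
Set Implicit Arguments.
Unset Strict Implicit.
Local Open Scope fset_scope.

(* Superposition, projection and duality cannot create new gaps, so every
   pattern of <<w>> has its completion inside A(w).  Conversely, let A(u) be
   contained in A(w) and induct on n = ||u||.  As n = n - 0 lies in A(u), it is
   a gap j - i of w, and projecting the dual of a projection of w to n gives a
   pattern P of <<w>> with ||P|| = n.  A pattern v of norm n is the
   superposition of any Q included in v and containing n with the proper
   projections of v, which lie in <<w>> by induction.  This first puts P ∪ u
   into <<w>>, then u† (taking Q = (P ∪ u)†), and finally u = u††. *)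

Definition completion_sub (u w : {fset nat}) : Prop :=
  forall d, completion u d -> completion w d.

Definition gap_pattern (w : {fset nat}) (j i : nat) : {fset nat} :=
  bproj (j - i) (bdual (bproj j w)).

Lemma leq_bnorm (w : {fset nat}) x : x \in w -> x <= bnorm w.
Proof. by move=> xw; apply: leq_bigmax_seq. Qed.

Lemma mem_bnorm (w : {fset nat}) : w != fset0 -> bnorm w \in w.
Proof.
case/fset0Pn=> x xw; rewrite /bnorm big_seq_fsetE /=.
have w_gt0 : 0 < #|predT : pred w| by apply/card_gt0P; exists [` xw].
by have [i _ ->] := eq_bigmax_cond val w_gt0; apply: valP.
Qed.

Lemma bnorm_eq (w : {fset nat}) n : n \in w -> {in w, forall x, x <= n} -> bnorm w = n.
Proof.
move=> nw le_wn; apply/eqP; rewrite eqn_leq leq_bnorm // andbT.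
by apply/bigmax_leqP_seq => x xw _; apply: le_wn.
Qed.

Lemma in_bproj j (w : {fset nat}) x : (x \in bproj j w) = (x \in w) && (x <= j).
Proof. by rewrite !inE. Qed.

Lemma in_bdual (w : {fset nat}) x :
  (x \in bdual w) = (0 < x <= bnorm w) && (bnorm w - x \notin w).
Proof.
apply/imfsetP/idP => /=.
- case=> i; rewrite !inE mem_iota add0n => /andP[lt_iw iw] ->.
  by rewrite subKn ?(ltnW lt_iw) // iw andbT; lia.
- case/andP=> x_range xw; exists (bnorm w - x); last by lia.
  by rewrite !inE mem_iota xw andbT; lia.
Qed.

Lemma bp_gt0 (w : {fset nat}) x : is_bp w -> x \in w -> 0 < x.
Proof. by case=> _ w0; case: x => // x0; rewrite x0 in w0. Qed.

Lemma bp_mem_bnorm (w : {fset nat}) : is_bp w -> bnorm w \in w.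
Proof. by case=> w_neq0 _; apply: mem_bnorm. Qed.

Lemma bp_bnorm_gt0 (w : {fset nat}) : is_bp w -> 0 < bnorm w.
Proof. by move=> bw; apply: bp_gt0 bw (bp_mem_bnorm bw). Qed.

Lemma fsetU_is_bp (u v : {fset nat}) : is_bp u -> is_bp v -> is_bp (u `|` v).
Proof.
case=> /fset0Pn[x xu] u0 [_ v0]; split; last by rewrite inE negb_or u0.
by apply/fset0Pn; exists x; rewrite inE xu.
Qed.

Lemma bnorm_bproj j (w : {fset nat}) : j \in w -> bnorm (bproj j w) = j.
Proof.
move=> jw; apply: bnorm_eq => [|x]; first by rewrite in_bproj jw leqnn.
by rewrite in_bproj => /andP[].
Qed.

Lemma bproj_is_bp j (w : {fset nat}) : is_bp w -> j \in w -> is_bp (bproj j w).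
Proof.
case=> _ w0 jw; split; last by rewrite in_bproj negb_and w0.
by apply/fset0Pn; exists j; rewrite in_bproj jw leqnn.
Qed.

Lemma bnorm_mem_bdual (w : {fset nat}) : is_bp w -> bnorm w \in bdual w.
Proof. by move=> bw; rewrite in_bdual subnn bp_bnorm_gt0 // leqnn; case: bw. Qed.

Lemma bnorm_bdual (w : {fset nat}) : is_bp w -> bnorm (bdual w) = bnorm w.
Proof.
move=> bw; apply: bnorm_eq => [|x]; first exact: bnorm_mem_bdual.
by rewrite in_bdual => /andP[/andP[]].
Qed.

Lemma bdual_is_bp (w : {fset nat}) : is_bp w -> is_bp (bdual w).
Proof.
move=> bw; split; last by rewrite in_bdual.
by apply/fset0Pn; exists (bnorm w); apply: bnorm_mem_bdual.
Qed.

Lemma bdualK (w : {fset nat}) : is_bp w -> bdual (bdual w) = w.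
Proof.
move=> bw; have wn := bp_mem_bnorm bw.
apply/fsetP => x; rewrite in_bdual bnorm_bdual // in_bdual negb_and negbK.
have [xw | xNw] := boolP (x \in w).
  have := bp_gt0 bw xw; have := leq_bnorm xw.
  by move=> le_xn x_gt0; rewrite subKn // xw orbT x_gt0 le_xn.
have x_neq_n : x != bnorm w by apply: contraNneq xNw => ->.
apply/negbTE/andP => -[/andP[x_gt0 le_xn]].
by rewrite subKn // (negbTE xNw) orbF subn_gt0 ltn_neqAle x_neq_n le_xn leq_subr.
Qed.

Lemma fsubset_bdual (u v : {fset nat}) :
  bnorm u = bnorm v -> u `<=` v -> bdual v `<=` bdual u.
Proof.
move=> uv_n /fsubsetP sub_uv; apply/fsubsetP => x; rewrite !in_bdual uv_n.
by case/andP=> -> /=; apply: contra => /sub_uv.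
Qed.

Lemma completion_bnorm (u : {fset nat}) : is_bp u -> completion u (bnorm u).
Proof.
move=> bu; exists (bnorm u), 0; rewrite subn0.
by split=> //; [exact: bp_mem_bnorm | case: bu | exact: bp_bnorm_gt0].
Qed.

Lemma completion_sub_bproj j (w : {fset nat}) : completion_sub (bproj j w) w.
Proof.
move=> _ [a [b [a_in b_out lt_ba ->]]]; move: a_in b_out.
rewrite !in_bproj negb_and => /andP[aw le_aj] /orP[bNw | ]; [by exists a, b | lia].
Qed.

(* Reflecting a gap a - b of w† at ||w|| gives the gap (||w|| - b) - (||w|| - a)
   of w; for b = 0 this uses ||w|| \in w. *)
Lemma completion_sub_bdual (w : {fset nat}) : is_bp w -> completion_sub (bdual w) w.
Proof.
move=> bw _ [a [b [aw bNw lt_ba ->]]]; move: aw; rewrite in_bdual => /andP[a_range aNw].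
exists (bnorm w - b), (bnorm w - a); split; [| exact: aNw | lia | lia].
move: bNw; rewrite in_bdual negb_and negbK.
case: b lt_ba => [_ _ | b lt_ba]; first by rewrite subn0 bp_mem_bnorm.
by case/orP => //; lia.
Qed.

Lemma completion_sub_fsetU (u v w : {fset nat}) :
  completion_sub u w -> completion_sub v w -> completion_sub (u `|` v) w.
Proof.
move=> sub_uw sub_vw _ [a [b [a_uv b_uv lt_ba ->]]].
move: a_uv b_uv; rewrite !inE negb_or => /orP[au | av] /andP[bu bv].
  by apply: sub_uw; exists a, b.
by apply: sub_vw; exists a, b.
Qed.

Lemma completion_sub_category (w : {fset nat}) :
  is_bp_category (fun u => is_bp u /\ completion_sub u w).
Proof.
split=> [u [] // | u v [bu sub_uw] [bv sub_vw] | u [bu sub_uw] | u j [bu sub_uw] ju].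
- by split; [exact: fsetU_is_bp | exact: completion_sub_fsetU].
- by split=> [|d /(completion_sub_bdual bu) /sub_uw //]; exact: bdual_is_bp.
- by split=> [|d /completion_sub_bproj /sub_uw //]; exact: bproj_is_bp.
Qed.

Lemma mem_bdual_bproj_gap (w : {fset nat}) j i :
  j \in w -> i \notin w -> i < j -> j - i \in bdual (bproj j w).
Proof.
move=> jw iw lt_ij; rewrite in_bdual bnorm_bproj // in_bproj subKn ?(ltnW lt_ij) //.
by rewrite (negbTE iw); lia.
Qed.

Lemma bnorm_gap_pattern (w : {fset nat}) j i :
  j \in w -> i \notin w -> i < j -> bnorm (gap_pattern w j i) = j - i.
Proof. by move=> jw iw lt_ij; rewrite bnorm_bproj // mem_bdual_bproj_gap. Qed.

Lemma category_gap_pattern (C : {fset nat} -> Prop) (w : {fset nat}) j i :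
  is_bp_category C -> C w -> j \in w -> i \notin w -> i < j -> C (gap_pattern w j i).
Proof.
case=> _ _ dualC projC Cw jw iw lt_ij.
exact: projC (dualC _ (projC _ _ Cw jw)) (mem_bdual_bproj_gap jw iw lt_ij).
Qed.

Section Generation.

Variable C : {fset nat} -> Prop.
Hypothesis catC : is_bp_category C.

Lemma category_fsetU_big (I : eqType) (s : seq I) (P : pred I) (F : I -> {fset nat}) Q :
  C Q -> (forall i, i \in s -> P i -> C (F i)) -> C (Q `|` \bigcup_(i <- s | P i) F i).
Proof.
case: catC => _ unionC _ _ CQ; elim: s => [|i s IHs] CF; first by rewrite big_nil fsetU0.
have CFs k : k \in s -> P k -> C (F k) by move=> ks; apply: CF; rewrite inE ks orbT.
rewrite big_cons; case: ifP => Pi; last exact: IHs.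
by rewrite fsetUCA; apply: unionC (IHs CFs); apply: CF; rewrite ?inE ?eqxx.
Qed.

Lemma category_cover (Q v : {fset nat}) :
  C Q -> Q `<=` v -> bnorm v \in Q ->
  (forall j, j \in v -> j < bnorm v -> C (bproj j v)) -> C v.
Proof.
move=> CQ /fsubsetP sub_Qv nQ Cproj.
have -> : v = Q `|` \bigcup_(j <- v | j < bnorm v) bproj j v.
  apply/fsetP => x; rewrite inE; apply/idP/orP => [xv | ].
    have [lt_xn | ] := ltnP x (bnorm v); last first.
      by move=> le_nx; left; rewrite (@anti_leq x (bnorm v)) ?leq_bnorm ?le_nx.
    by right; apply/bigfcupP; exists x; rewrite ?in_bproj xv ?lt_xn ?leqnn.
  by case=> [/sub_Qv // | /bigfcupP[j _]]; rewrite in_bproj => /andP[].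
by apply: category_fsetU_big => // j; apply: Cproj.
Qed.

Variable w : {fset nat}.
Hypothesis Cw : C w.

Lemma category_completion_sub (u : {fset nat}) : is_bp u -> completion_sub u w -> C u.
Proof.
have [N] := ubnP (bnorm u); elim: N u => // N IH u; rewrite ltnS => le_uN bu sub_uw.
have [_ _ dualC _] := catC; set n := bnorm u.
have Cproj v : is_bp v -> completion_sub v w -> bnorm v = n ->
    forall j, j \in v -> j < bnorm v -> C (bproj j v).
  move=> bv sub_vw vn j jv lt_jv; apply: IH; first by rewrite bnorm_bproj //; lia.
    exact: bproj_is_bp.
  by move=> d /completion_sub_bproj /sub_vw.
have [j [i [jw iw lt_ij n_ji]]] := sub_uw _ (completion_bnorm bu).
have CP : C (gap_pattern w j i) by apply: category_gap_pattern.
have [bP sub_Pw] : is_bp (gap_pattern w j i) /\ completion_sub (gap_pattern w j i) w.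
  have bw : is_bp w by case: catC => bpC _ _ _; apply: bpC.
  exact: category_gap_pattern (completion_sub_category w) (conj bw (fun d => id)) jw iw lt_ij.
have nP : bnorm (gap_pattern w j i) = n by rewrite bnorm_gap_pattern.
set M := gap_pattern w j i `|` u.
have bM : is_bp M by apply: fsetU_is_bp.
have nM : bnorm M = n.
  apply: bnorm_eq => [|x]; first by rewrite inE -nP bp_mem_bnorm.
  by rewrite inE => /orP[] /leq_bnorm; rewrite ?nP.
have CM : C M.
  apply: (category_cover CP); [exact: fsubsetUl | by rewrite nM -nP bp_mem_bnorm |].
  by apply: Cproj => //; apply: completion_sub_fsetU.
have CuD : C (bdual u).
  apply: (category_cover (dualC _ CM)); first by apply: fsubset_bdual; rewrite ?nM ?fsubsetUr.
    by rewrite bnorm_bdual // -/n -nM bnorm_mem_bdual.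
  apply: Cproj; [exact: bdual_is_bp | | exact: bnorm_bdual].
  by move=> d /(completion_sub_bdual bu) /sub_uw.
by rewrite -(bdualK bu); apply: dualC.
Qed.

End Generation.

Theorem lemma7p9 (w : {fset nat}) :
  is_bp w ->
  forall w' : {fset nat},
    generated_cat w w' <-> (is_bp w' /\ (forall d, completion w' d -> completion w d)).
Proof.
move=> bw w'; split=> [gen_w' | [bw' sub_w'w] C catC Cw].
  exact: gen_w' _ (completion_sub_category w) (conj bw (fun d => id)).
exact: category_completion_sub Cw _ bw' sub_w'w.
Qed.
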